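(* Let $d,n$ be positive integers, let $\mathcal D$ be a Ferrers diagram of order $n$, and suppose $\mathcal D\cap\mathcal B_{n,d-1}\neq\emptyset$, where $\mathcal B_{n,d-1}=\{d-1,\dots,n\}\times\{d-1,\dots,n\}$. Then the following are equivalent: (1) $(\mathcal D,d)$ is irreducible. (2) $(\mathcal D,d)$ is in $(a,b)$-standard form for some $a,b$, and: $\nu_0(\mathcal D,d)=\nu_{d-1}(\mathcal D,d)$; $\nu_j(\mathcal D,d)\ge\nu_0(\mathcal D,d)$ for all $j\in[d-2]$; and, only in the case $a=b=d-1$, there exists $j\in[d-2]$ with $\nu_j(\mathcal D,d)=\nu_0(\mathcal D,d)$. (3) $(\mathcal D,d)$ is in $(a,b)$-standard form for some $a,b$, and: $\sum_{i=1}^{d-2}c_i(Y)-\sum_{i=1}^{d-2}c_i(X)=(b-a)(d-1)$; for all $j\in[d-2]$, $$j(b-a+d-1-j)+\sum_{i=1}^{j}c_{d-i}(X)-\sum_{i=1}^{j}c_i(Y)\ge 0;$$ and, only in the case $a=b=d-1$, there exists $j\in[d-2]$ for which this inequality is an equality.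
   Context: $\mathbb N=\{1,2,\dots\}$, $[n]=\{1,\dots,n\}$. A Ferrers diagram is a finite $\mathcal D\subseteq\mathbb N^2$ such that $(x,y)\in\mathcal D$ implies $(i,j)\in\mathcal D$ for all $i\in[x],j\in[y]$ (first coordinate = row, second = column); order $n$ means $\mathcal D\subseteq[n]^2$. With column heights $c_i=|\mathcal D\cap(\mathbb N\times\{i\})|$, for $0\le j\le d-1$ define $\nu_j(\mathcal D,d)=\sum_{i\ge j+1}\max\{0,c_i-d+j\}$ (the number of $(x,y)\in\mathcal D$ with $x\ge d-j$, $y\ge j+1$) and $\nu_{\min}(\mathcal D,d)=\min_j\nu_j(\mathcal D,d)$. A point $P\in\mathcal D$ is removable if $\mathcal D\setminus\{P\}$ is a Ferrers diagram. For $\mathcal D'=\mathcal D\setminus\{P\}$ with $P$ removable, write $\mathcal D'\xrightarrow{d}\mathcal D$ if $\nu_{\min}(\mathcal D',d)=\nu_{\min}(\mathcal D,d)$ and $\mathcal D\xrightarrow{d}\mathcal D'$ otherwise; $(\mathcal D,d)$ is irreducible if there is no Ferrers diagram $\mathcal D'$ with $\mathcal D'\xrightarrow{d}\mathcal D$. The pair $(\mathcal D,d)$ (with $\mathcal D$ of order $n$) is in $(a,b)$-standard form, for integers $a,b\ge d-1$, if $\mathcal D\cap\mathcal B_{n,d-1}=\{d-1,\dots,a\}\times\{d-1,\dots,b\}$. In that case, for $i\in[d-2]$ set $c_i(X)=|\{y>b:(i,y)\in\mathcal D\}|$ and $c_i(Y)=|\{x>a:(x,i)\in\mathcal D\}|$,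 and by convention $c_{d-1}(X)=c_{d-1}(Y)=0$. *)

From mathcomp Require Import all_boot all_order all_algebra.
From mathcomp Require Import finmap.
Set Implicit Arguments. Unset Strict Implicit. Unset Printing Implicit Defensive.
Import GRing.Theory Num.Theory.
Local Open Scope fset_scope.

(* A finite subset of N^2 (first coordinate = row, second = column). *)
Definition diagram := {fset (nat * nat)}.

Definition ferrers (D : diagram) : Prop :=
  forall x y, (x, y) \in D ->
    [/\ 0 < x, 0 < y &
        forall i j, 0 < i <= x -> 0 < j <= y -> (i, j) \in D].

Definition of_order (n : nat) (D : diagram) : Prop :=
  forall x y, (x, y) \in D -> (x <= n) && (y <= n).

Definition nu (D : diagram) (d j : nat) : nat :=
  #|` [fset p in D | (d - j <= p.1) && (j.+1 <= p.2)] |.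

Definition numin (D : diagram) (d : nat) : nat :=
  \big[minn/nu D d 0]_(0 <= j < d) nu D d j.

(* D1 ->_d D2 : either D1 = D2 \ {P} (P removable from D2) with equal
   nu_min, or D2 = D1 \ {P} (P removable from D1) with different nu_min.
   (Removability of P is the Ferrers property of the smaller diagram,
   which is required of both arguments in [irreducible].) *)
Definition arrow (d : nat) (D1 D2 : diagram) : Prop :=
  (exists P, [/\ P \in D2, D1 = D2 `\ P & numin D1 d = numin D2 d]) \/
  (exists P, [/\ P \in D1, D2 = D1 `\ P & numin D2 d <> numin D1 d]).

Definition irreducible (D : diagram) (d : nat) : Prop :=
  ~ exists D' : diagram, ferrers D' /\ arrow d D' D.

Definition inB (n d x y : nat) : bool :=
  (d.-1 <= x <= n) && (d.-1 <= y <= n).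

Definition standard_form (n : nat) (D : diagram) (d a b : nat) : Prop :=
  [/\ d.-1 <= a, d.-1 <= b &
      forall x y, ((x, y) \in D) && inB n d x y = (d.-1 <= x <= a) && (d.-1 <= y <= b)].

Definition cX (D : diagram) (d b i : nat) : nat :=
  if i == d.-1 then 0 else #|` [fset p in D | (p.1 == i) && (b < p.2)] |.

Definition cY (D : diagram) (d a i : nat) : nat :=
  if i == d.-1 then 0 else #|` [fset p in D | (p.2 == i) && (a < p.1)] |.

Definition ineq3 (D : diagram) (d a b j : nat) : int :=
  (j%:Z * (b%:Z - a%:Z + d%:Z - 1 - j%:Z)
   + \sum_(1 <= i < j.+1) (cX D d b (d - i))%:Z
   - \sum_(1 <= i < j.+1) (cY D d a i)%:Z)%R.

Definition cond2 (n : nat) (D : diagram) (d : nat) : Prop :=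
  exists a b, [/\ standard_form n D d a b,
    nu D d 0 = nu D d d.-1,
    (forall j, 1 <= j <= d - 2 -> nu D d 0 <= nu D d j) &
    (a = d.-1 /\ b = d.-1 -> exists j, 1 <= j <= d - 2 /\ nu D d j = nu D d 0)].

Definition cond3 (n : nat) (D : diagram) (d : nat) : Prop :=
  exists a b, [/\ standard_form n D d a b,
    (\sum_(1 <= i < d.-1) (cY D d a i)%:Z - \sum_(1 <= i < d.-1) (cX D d b i)%:Z
       = (b%:Z - a%:Z) * (d.-1)%:Z)%R,
    (forall j, 1 <= j <= d - 2 -> (0 <= ineq3 D d a b j)%R) &
    (a = d.-1 /\ b = d.-1 -> exists j, 1 <= j <= d - 2 /\ ineq3 D d a b j = 0%R)].

From mathcomp Require Import all_boot all_order all_algebra finmap zify ring.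
Set Implicit Arguments. Unset Strict Implicit. Unset Printing Implicit Defensive.
Import GRing.Theory.
Local Open Scope fset_scope.
Local Open Scope nat_scope.

(* Adding or removing a cell changes nu_j by one exactly when the cell lies in
   the region counted by nu_j.  Hence (D, d) is irreducible iff every removable
   cell lies in the region of some minimising index and every addable cell
   avoids the region of some minimising index.  Write d = k + 1.  A cell beyond
   (k, k) lies in every region, so an irreducible D has no addable cell there:
   D meets B_{n,k} in the rectangle spanned by row k and column k.  Consecutive
   nu_j differ by a row tail minus a column tail; the largest minimiser is
   pushed up to k and the smallest down to 0 by adding or removing the end of a
   row or column or, when the two rows and two columns involved are flat, by
   the strict convexity nu_{j-1} + nu_{j+1} = 2 nu_j - 2.  Conversely, under (2)
   the regions of the minimisers 0, k and (in the square case) some j in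
   [1, k-1] catch every removable and miss every addable cell.  Summing the
   differences gives nu_j - nu_0 = ineq3 j, which turns (2) into (3). *)

Section FsetCount.
Variable K : choiceType.

Lemma count_fset_size (A : {fset K}) (P : pred K) (s : seq K) :
  uniq s -> (forall x, (x \in A) && P x = (x \in s)) -> count P A = size s.
Proof.
move=> s_uniq memAs; rewrite -size_filter; apply/perm_size/uniq_perm => //.
  exact/filter_uniq/fset_uniq.
by move=> x; rewrite mem_filter andbC memAs.
Qed.

Lemma card_fset_sep (A : {fset K}) (P : pred K) : #|` [fset x in A | P x]| = count P A.
Proof.
apply/esym/count_fset_size; first exact: fset_uniq.
by move=> x; rewrite !inE.
Qed.

Lemma count_fsetD1 (A : {fset K}) (P : pred K) (a : K) :
  a \in A -> count P A = P a + count P (A `\ a).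
Proof.
move=> aA; suff /permP-> : perm_eq A (a :: (A `\ a)) by [].
apply: uniq_perm; rewrite /= ?fset_uniq ?fsetD11 // => x.
by rewrite inE in_fsetD1; case: eqP => [->|].
Qed.

Lemma count_fsetU1 (A : {fset K}) (P : pred K) (a : K) :
  a \notin A -> count P (a |` A) = P a + count P A.
Proof. by move=> aA; rewrite (count_fsetD1 _ (fset1U1 a A)) fsetU1K. Qed.

End FsetCount.

Lemma count_add_eq (T : Type) (P Q P' Q' : pred T) (s : seq T) :
  (forall x, P x + Q x = P' x + Q' x) ->
  count P s + count Q s = count P' s + count Q' s.
Proof. by move=> PQ; elim: s => //= x s IHs; have := PQ x; lia. Qed.

Definition row_len (D : diagram) (x : nat) : nat := \max_(p <- D | p.1 == x) p.2.
Definition col_len (D : diagram) (y : nat) : nat := \max_(p <- D | p.2 == y) p.1.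

Lemma row_len_mem (D : diagram) x : 0 < row_len D x -> (x, row_len D x) \in D.
Proof.
rewrite /row_len big_seq_cond.
elim/big_rec: _ => // -[u v] m /andP[uvD /= /eqP uE] IHm; subst u.
by rewrite /maxn; case: (ltnP v m).
Qed.

Lemma col_len_mem (D : diagram) y : 0 < col_len D y -> (col_len D y, y) \in D.
Proof.
rewrite /col_len big_seq_cond.
elim/big_rec: _ => // -[u v] m /andP[uvD /= /eqP vE] IHm; subst v.
by rewrite /maxn; case: (ltnP u m).
Qed.

Section FerrersShape.
Variable D : diagram.
Hypothesis FD : ferrers D.

Lemma mem_row x y : 0 < x -> ((x, y) \in D) = (0 < y <= row_len D x).
Proof.
move=> x_gt0; apply/idP/andP => [xyD | [y_gt0 y_le]].
  have [_ -> _] := FD xyD; split=> //.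
  exact: (leq_bigmax_seq (F := snd) _ xyD).
have [_ _ sub] := FD (row_len_mem (leq_trans y_gt0 y_le)).
by apply: sub; lia.
Qed.

Lemma mem_col x y : 0 < y -> ((x, y) \in D) = (0 < x <= col_len D y).
Proof.
move=> y_gt0; apply/idP/andP => [xyD | [x_gt0 x_le]].
  have [-> _ _] := FD xyD; split=> //.
  exact: (leq_bigmax_seq (F := fst) _ xyD).
have [_ _ sub] := FD (col_len_mem (leq_trans x_gt0 x_le)).
by apply: sub; lia.
Qed.

Lemma leq_row_len x x' y : (x', y) \in D -> 0 < x <= x' -> y <= row_len D x.
Proof.
move=> xyD /andP[x_gt0 le_xx']; have [_ y_gt0 sub] := FD xyD.
by have := sub x y; rewrite mem_row // x_gt0 le_xx' y_gt0 leqnn => /(_ isT isT) /andP[].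
Qed.

Lemma leq_col_len x y y' : (x, y') \in D -> 0 < y <= y' -> x <= col_len D y.
Proof.
move=> xyD /andP[y_gt0 le_yy']; have [x_gt0 _ sub] := FD xyD.
by have := sub x y; rewrite mem_col // x_gt0 le_yy' y_gt0 leqnn => /(_ isT isT) /andP[].
Qed.

Lemma row_len_nonincr x : 0 < x -> row_len D x.+1 <= row_len D x.
Proof.
move=> x_gt0; have [->//|r_gt0] := posnP (row_len D x.+1).
by apply: leq_row_len (row_len_mem r_gt0) _; rewrite x_gt0 /=.
Qed.

Lemma col_len_nonincr y : 0 < y -> col_len D y.+1 <= col_len D y.
Proof.
move=> y_gt0; have [->//|c_gt0] := posnP (col_len D y.+1).
by apply: leq_col_len (col_len_mem c_gt0) _; rewrite y_gt0 /=.
Qed.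

Lemma count_row_tail x t : 0 < x ->
  count (fun p : nat * nat => (p.1 == x) && (t < p.2)) D = row_len D x - t.
Proof.
move=> x_gt0; rewrite (@count_fset_size _ _ _ [seq (x, y) | y <- iota t.+1 (row_len D x - t)]).
- by rewrite size_map size_iota.
- by rewrite map_inj_uniq ?iota_uniq // => y y' [].
move=> [u v] /=; apply/andP/mapP => [[uvD /andP[/eqP eu lt_tv]] | [y]].
  by subst u; exists v => //; rewrite mem_iota; move: uvD; rewrite mem_row //; lia.
by rewrite mem_iota => rng [-> ->]; rewrite mem_row // eqxx /=; lia.
Qed.

Lemma count_col_tail y t : 0 < y ->
  count (fun p : nat * nat => (p.2 == y) && (t < p.1)) D = col_len D y - t.
Proof.
move=> y_gt0; rewrite (@count_fset_size _ _ _ [seq (x, y) | x <- iota t.+1 (col_len D y - t)]).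
- by rewrite size_map size_iota.
- by rewrite map_inj_uniq ?iota_uniq // => x x' [].
move=> [u v] /=; apply/andP/mapP => [[uvD /andP[/eqP ev lt_tu]] | [x]].
  by subst v; exists u => //; rewrite mem_iota; move: uvD; rewrite mem_col //; lia.
by rewrite mem_iota => rng [-> ->]; rewrite mem_col // eqxx /=; lia.
Qed.

End FerrersShape.

Lemma ferrers_fsetD1_corner (D : diagram) x y : 0 < x -> 0 < y -> ferrers (D `\ (x, y)) ->
  (x.+1, y) \notin D /\ (x, y.+1) \notin D.
Proof.
move=> x_gt0 y_gt0 FDP.
have above u v : (u, v) \in D -> x <= u -> y <= v -> (u, v) = (x, y).
  move=> uvD xu yv; apply/eqP/negPn/negP => neq.
  have uvDP : (u, v) \in D `\ (x, y) by rewrite in_fsetD1 neq.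
  have [_ _ sub] := FDP u v uvDP.
  have : (x, y) \in D `\ (x, y) by apply: sub; lia.
  by rewrite in_fsetD1 eqxx.
split; apply/negP => PD.
  by case: (above _ _ PD (leqnSn x) (leqnn y)); lia.
by case: (above _ _ PD (leqnn x) (leqnSn y)); lia.
Qed.

Section FerrersCells.
Variable D : diagram.
Hypothesis FD : ferrers D.

Lemma ferrers_fsetD1 x y :
  (x.+1, y) \notin D -> (x, y.+1) \notin D -> ferrers (D `\ (x, y)).
Proof.
move=> xSyD xyS_D u v; rewrite in_fsetD1 => /andP[neq uvD].
have [u_gt0 v_gt0 sub] := FD uvD; split=> // i j ri rj.
rewrite in_fsetD1 sub // andbT; apply: contraNneq neq => -[ei ej]; subst i j.
have [ltxu|] := ltnP x u; first by case/negP: xSyD; apply: sub; lia.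
have [ltyv|] := ltnP y v; first by case/negP: xyS_D; apply: sub; lia.
by move=> le_vy le_ux; apply/eqP; congr pair; lia.
Qed.

Lemma ferrers_fsetU1 x y : 0 < x -> 0 < y ->
  (1 < x -> (x.-1, y) \in D) -> (1 < y -> (x, y.-1) \in D) -> ferrers ((x, y) |` D).
Proof.
move=> x_gt0 y_gt0 upD leftD u v; rewrite in_fset1U => /orP[/eqP[-> ->] | uvD].
  split=> // i j ri rj; rewrite in_fset1U.
  have [ltix|] := ltnP i x.
    have [_ _ sub] := FD (upD (leq_ltn_trans (proj1 (andP ri)) ltix)).
    by rewrite sub ?orbT //; lia.
  have [ltjy|] := ltnP j y.
    have [_ _ sub] := FD (leftD (leq_ltn_trans (proj1 (andP rj)) ltjy)).
    by rewrite sub ?orbT //; lia.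
  by move=> le_yj le_xi; apply/orP; left; apply/eqP; congr pair; lia.
have [u_gt0 v_gt0 sub] := FD uvD; split=> // i j ri rj.
by rewrite in_fset1U sub ?orbT.
Qed.

Lemma ferrers_add_row_end x : 0 < x -> (1 < x -> row_len D x < row_len D x.-1) ->
  ferrers ((x, (row_len D x).+1) |` D).
Proof.
move=> x_gt0 shorter; apply: ferrers_fsetU1 => //= [x_gt1 | r_gt0].
  by have := shorter x_gt1; rewrite (mem_row FD); lia.
by rewrite (mem_row FD) // leqnn andbT.
Qed.

Lemma ferrers_add_col_end y : 0 < y -> (1 < y -> col_len D y < col_len D y.-1) ->
  ferrers (((col_len D y).+1, y) |` D).
Proof.
move=> y_gt0 shorter; apply: ferrers_fsetU1 => //= [c_gt0 | y_gt1].
  by rewrite (mem_col FD) // leqnn andbT.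
by have := shorter y_gt1; rewrite (mem_col FD); lia.
Qed.

Lemma ferrers_del_row_end x : 0 < x -> row_len D x.+1 < row_len D x ->
  ferrers (D `\ (x, row_len D x)).
Proof.
move=> x_gt0 shorter; apply: ferrers_fsetD1; rewrite (mem_row FD) //; lia.
Qed.

Lemma ferrers_del_col_end y : 0 < y -> col_len D y.+1 < col_len D y ->
  ferrers (D `\ (col_len D y, y)).
Proof.
move=> y_gt0 shorter; apply: ferrers_fsetD1; rewrite (mem_col FD) //; lia.
Qed.

End FerrersCells.

Definition nu_region (d j : nat) : pred (nat * nat) :=
  fun p => (d - j <= p.1) && (j.+1 <= p.2).

Definition nu_argmin (D : diagram) (d j : nat) : bool :=
  (j < d) && (nu D d j == numin D d).

Section NuMin.
Variable d : nat.

Lemma nuE (D : diagram) j : nu D d j = count (nu_region d j) D.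
Proof. exact: card_fset_sep. Qed.

Lemma nu_fsetD1 (D : diagram) j P : P \in D -> nu D d j = nu_region d j P + nu (D `\ P) d j.
Proof. by move=> PD; rewrite !nuE (count_fsetD1 _ PD). Qed.

Lemma nu_fsetU1 (D : diagram) j P : P \notin D -> nu (P |` D) d j = nu_region d j P + nu D d j.
Proof. by move=> PD; rewrite !nuE count_fsetU1. Qed.

Lemma numin_le (D : diagram) j : j < d -> numin D d <= nu D d j.
Proof.
move=> jd; have: j \in index_iota 0 d by rewrite mem_index_iota.
rewrite /numin; elim: (index_iota 0 d) => // i s IHs.
rewrite inE big_cons geq_min; case/orP=> [/eqP-> | /IHs->]; by rewrite ?leqnn ?orbT.
Qed.

Lemma numin_attained (D : diagram) : 0 < d -> exists j, nu_argmin D d j.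
Proof.
move=> d_gt0; rewrite /nu_argmin /numin big_seq.
elim/big_rec: _ => [|i m]; first by exists 0; rewrite d_gt0 /=.
rewrite mem_index_iota => /andP[_ id] [j /andP[jd /eqP <-]].
rewrite /minn; case: ltnP => _; [exists i | exists j]; by rewrite ?id ?jd eqxx.
Qed.

Lemma leq_numin (D D' : diagram) : 0 < d ->
  (forall j, j < d -> nu D d j <= nu D' d j) -> numin D d <= numin D' d.
Proof.
move=> d_gt0 le_nu; have [j /andP[jd /eqP <-]] := numin_attained D' d_gt0.
exact: leq_trans (numin_le D jd) (le_nu j jd).
Qed.

End NuMin.

Section NuMinCell.
Variables (d : nat) (D : diagram) (P : nat * nat).
Hypothesis d_gt0 : 0 < d.

Lemma numin_fsetD1_neq : P \in D ->
  numin (D `\ P) d <> numin D d <-> exists2 j, nu_argmin D d j & nu_region d j P.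
Proof.
move=> PD; have le_min : numin (D `\ P) d <= numin D d.
  by apply: leq_numin => // j _; rewrite (nu_fsetD1 _ _ PD) leq_addl.
split=> [neq | [j /andP[jd /eqP nuj] inR]].
  have [j /andP[jd /eqP nuj]] := numin_attained (D `\ P) d_gt0.
  have := nu_fsetD1 d j PD; have := numin_le D jd.
  by exists j; [rewrite /nu_argmin jd /=; apply/eqP|]; lia.
by have := nu_fsetD1 d j PD; have := numin_le (D `\ P) jd; lia.
Qed.

Lemma numin_fsetU1_eq : P \notin D ->
  numin (P |` D) d = numin D d <-> exists2 j, nu_argmin D d j & ~~ nu_region d j P.
Proof.
move=> PD; have le_min : numin D d <= numin (P |` D) d.
  by apply: leq_numin => // j _; rewrite (nu_fsetU1 _ _ PD) leq_addl.
split=> [eq_min | [j /andP[jd /eqP nuj] notR]].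
  have [j /andP[jd /eqP nuj]] := numin_attained (P |` D) d_gt0.
  have := nu_fsetU1 d j PD; have := numin_le D jd.
  by exists j; [rewrite /nu_argmin jd /=; apply/eqP|]; lia.
by have := nu_fsetU1 d j PD; have := numin_le (P |` D) jd; lia.
Qed.

End NuMinCell.

Lemma irreducibleP d (D : diagram) : 0 < d -> irreducible D d <->
  (forall P, P \in D -> ferrers (D `\ P) ->
     exists2 j, nu_argmin D d j & nu_region d j P) /\
  (forall P, P \notin D -> ferrers (P |` D) ->
     exists2 j, nu_argmin D d j & ~~ nu_region d j P).
Proof.
move=> d_gt0; split=> [irrD | [delP addP] [D' [FD' [[P [PD eD' eq_min]] | [P [PD' eD neq_min]]]]]].
- split=> [P PD FDP | P PD FPD].
    apply/(numin_fsetD1_neq d_gt0 PD) => eq_min; apply: irrD.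
    by exists (D `\ P); split=> //; left; exists P.
  apply/(numin_fsetU1_eq d_gt0 PD).
  case: (numin (P |` D) d =P numin D d) => // neq_min; case: irrD.
  exists (P |` D); split=> //; right; exists P.
  by rewrite fset1U1 fsetU1K //; split=> // /esym.
- subst D'; exact: (numin_fsetD1_neq d_gt0 PD).2 (delP P PD FD') eq_min.
have eD' : D' = P |` D by rewrite eD fsetD1K.
have PD : P \notin D by rewrite eD fsetD11.
have FPD : ferrers (P |` D) by rewrite -eD'.
by apply: neq_min; rewrite eD'; apply/esym/(numin_fsetU1_eq d_gt0 PD).2/addP.
Qed.

Section NuShape.
Variables (k : nat) (D : diagram).
Hypothesis FD : ferrers D.

Lemma nu_succ j : j < k ->
  nu D k.+1 j.+1 + (col_len D j.+1 - (k - j)) = nu D k.+1 j + (row_len D (k - j) - j.+1).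
Proof.
move=> jk; rewrite -(count_col_tail FD) // -(count_row_tail FD) ?subn_gt0 // !nuE.
by apply: count_add_eq => -[x y]; rewrite /nu_region /=; lia.
Qed.

Lemma nu_flat j : (k, k) \in D -> 0 < j < k ->
  row_len D (k - j).+1 = row_len D (k - j) -> col_len D j.+1 = col_len D j ->
  nu D k.+1 j.-1 + nu D k.+1 j.+1 + 2 = 2 * nu D k.+1 j.
Proof.
move=> kk /andP[j_gt0 jk] eq_row eq_col.
have := nu_succ jk; have := nu_succ (leq_ltn_trans (leq_pred j) jk).
rewrite prednK // (_ : k - j.-1 = (k - j).+1); last by lia.
have := leq_row_len FD kk (x := k - j); have := leq_col_len FD kk (y := j).
lia.
Qed.

End NuShape.

Section Ineq3.
Variables (D : diagram) (k a b : nat).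
Local Open Scope ring_scope.

Lemma ineq3_0 : ineq3 D k.+1 a b 0 = 0.
Proof. by rewrite /ineq3 !big_geq // mul0r subr0. Qed.

Lemma ineq3S j : (j < k)%N ->
  ineq3 D k.+1 a b j.+1 = ineq3 D k.+1 a b j + (b%:Z - a%:Z + k%:Z - 2 * j%:Z - 1)
    + (cX D k.+1 b (k - j))%:Z - (cY D k.+1 a j.+1)%:Z.
Proof. by move=> jk; rewrite /ineq3 !(big_nat_recr j.+1 1) //= subSS !intS; ring. Qed.

Lemma ineq3_last : (0 < k)%N ->
  ineq3 D k.+1 a b k = k%:Z * (b%:Z - a%:Z)
    + \sum_(1 <= i < k) (cX D k.+1 b i)%:Z - \sum_(1 <= i < k) (cY D k.+1 a i)%:Z.
Proof.
move=> k_gt0; rewrite /ineq3 big_nat_rev /=.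
rewrite (eq_big_nat _ _ (F2 := fun i => (cX D k.+1 b i)%:Z)); last first.
  by move=> i ri; congr (Posz (cX _ _ _ _)); lia.
rewrite !(big_nat_recr k 1) //= /cX /cY /= eqxx intS; ring.
Qed.

End Ineq3.

Section StandardForm.
Variables (n k a b : nat) (D : diagram).
Hypotheses (FD : ferrers D) (OD : of_order n D) (SF : standard_form n D k.+1 a b).

Lemma standard_form_mem x y : k <= x <= a -> k <= y <= b -> (x, y) \in D.
Proof. by case: SF => _ _ sf rx ry; have := sf x y; rewrite /= rx ry => /andP[]. Qed.

Lemma standard_form_bound x y : (x, y) \in D -> k <= x -> k <= y -> (x <= a) && (y <= b).
Proof.
case: SF => _ _ sf xyD kx ky; have /andP[xn yn] := OD xyD.
by have := sf x y; rewrite /= xyD /inB /= kx ky xn yn /= => <-.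
Qed.

Lemma standard_form_corner : (k, k) \in D.
Proof. by case: SF => /= ka kb _; rewrite standard_form_mem ?leqnn. Qed.

Lemma standard_form_row_len x : 0 < x <= k -> row_len D x = b + cX D k.+1 b x.
Proof.
move=> rx; have [k_gt0 _ _] := FD standard_form_corner; have [/= ka kb _] := SF.
have kbD : (k, b) \in D by apply: standard_form_mem; rewrite ?leqnn ?ka ?kb.
have le_br := leq_row_len FD kbD rx.
rewrite /cX /=; have [eq_xk | ne_xk] := eqVneq x k; last first.
  by rewrite card_fset_sep (count_row_tail FD) ?subnKC //; lia.
subst x.
have rkD : (k, row_len D k) \in D by apply: row_len_mem; lia.
by have /andP[_ le_rb] := standard_form_bound rkD (leqnn k) (leq_trans kb le_br); lia.
Qed.

Lemma standard_form_col_len y : 0 < y <= k -> col_len D y = a + cY D k.+1 a y.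
Proof.
move=> ry; have [k_gt0 _ _] := FD standard_form_corner; have [/= ka kb _] := SF.
have kaD : (a, k) \in D by apply: standard_form_mem; rewrite ?leqnn ?ka ?kb.
have le_ac := leq_col_len FD kaD ry.
rewrite /cY /=; have [eq_yk | ne_yk] := eqVneq y k; last first.
  by rewrite card_fset_sep (count_col_tail FD) ?subnKC //; lia.
subst y.
have ckD : (col_len D k, k) \in D by apply: col_len_mem; lia.
by have /andP[le_ca _] := standard_form_bound ckD (leq_trans ka le_ac) (leqnn k); lia.
Qed.

Lemma nu_ineq3 j : j <= k ->
  ((nu D k.+1 j)%:Z = (nu D k.+1 0)%:Z + ineq3 D k.+1 a b j)%R.
Proof.
elim: j => [|j IHj] jk; first by rewrite ineq3_0 addr0.
have [/= ka kb _] := SF; have := nu_succ FD jk.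
by rewrite standard_form_col_len ?standard_form_row_len ?ineq3S //; lia.
Qed.

Hypotheses (argmin_0 : nu_argmin D k.+1 0) (argmin_k : nu_argmin D k.+1 k).

Lemma standard_form_addable P : P \notin D -> ferrers (P |` D) ->
  exists2 j, nu_argmin D k.+1 j & ~~ nu_region k.+1 j P.
Proof.
case: P => x y PD FPD; have [x_gt0 y_gt0 sub] := FPD x y (fset1U1 _ _).
have [k_gt0 _ _] := FD standard_form_corner.
have [xk | kx] := leqP x k; first by exists 0; rewrite // /nu_region /=; lia.
have [yk | ky] := leqP y k; first by exists k; rewrite // /nu_region /=; lia.
have mem_below u v : 0 < u <= x -> 0 < v <= y -> (u, v) != (x, y) -> (u, v) \in D.
  by move=> ru rv neq; have := sub u v ru rv; rewrite in_fset1U (negbTE neq).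
have /andP[_ yb] : (x.-1 <= a) && (y <= b).
  by apply: standard_form_bound; rewrite ?mem_below ?xpair_eqE ?eqxx ?andbT ?neq_ltn //; lia.
have /andP[xa _] : (x <= a) && (y.-1 <= b).
  by apply: standard_form_bound; rewrite ?mem_below ?xpair_eqE ?eqxx ?andbT ?neq_ltn //; lia.
by case/negP: PD; apply: standard_form_mem; lia.
Qed.

Lemma standard_form_removable P :
  (a = k /\ b = k -> exists2 j, 0 < j < k & nu_argmin D k.+1 j) ->
  P \in D -> ferrers (D `\ P) -> exists2 j, nu_argmin D k.+1 j & nu_region k.+1 j P.
Proof.
case: P => x y square PD FDP; have [x_gt0 y_gt0 _] := FD PD.
have [kx | xk] := ltnP k x; first by exists 0; rewrite // /nu_region /=; lia.
have [ky | yk] := ltnP k y; first by exists k; rewrite // /nu_region /=; lia.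
have [xSyD xySD] := ferrers_fsetD1_corner x_gt0 y_gt0 FDP.
have [_ _ below_kk] := FD standard_form_corner.
have [ltxk | eq_xk] : x < k \/ x = k by lia.
  by case/negP: xSyD; apply: below_kk; lia.
have [ltyk | eq_yk] : y < k \/ y = k by lia.
  by case/negP: xySD; apply: below_kk; lia.
subst x y; have [ka kb _] := SF.
have [ltka | eq_ak] : k < a \/ a = k by move: ka => /=; lia.
  by case/negP: xSyD; apply: standard_form_mem; lia.
have [ltkb | eq_bk] : k < b \/ b = k by move: kb => /=; lia.
  by case/negP: xySD; apply: standard_form_mem; lia.
have [j j_rng j_min] := square (conj eq_ak eq_bk).
by exists j; rewrite // /nu_region /=; lia.
Qed.

End StandardForm.

Lemma cond2_irreducible n k (D : diagram) :
  ferrers D -> of_order n D -> cond2 n D k.+1 -> irreducible D k.+1.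
Proof.
move=> FD OD [a [b [SF /= nu_0k nu_0j square]]].
have nu0_le j : j <= k -> nu D k.+1 0 <= nu D k.+1 j.
  move=> jk; have [-> // | j_gt0] := posnP j.
  have [ltjk | ->] : j < k \/ j = k by lia.
    by apply: nu_0j; lia.
  by rewrite nu_0k.
have argmin_0 : nu_argmin D k.+1 0.
  have [j /andP[jk /eqP nu_j]] := numin_attained D (ltn0Sn k).
  by rewrite /nu_argmin /= eqn_leq numin_le // -nu_j nu0_le.
have argmin_k : nu_argmin D k.+1 k.
  by move: argmin_0; rewrite /nu_argmin ltnSn nu_0k => /andP[].
apply/(irreducibleP D (ltn0Sn k)); split=> P.
  apply: (standard_form_removable FD SF argmin_0 argmin_k) => -[eq_ak eq_bk].
  have [j [j_rng nu_j]] := square (conj eq_ak eq_bk).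
  by exists j; [lia | move: argmin_0; rewrite /nu_argmin nu_j; lia].
exact: (standard_form_addable FD OD SF argmin_0 argmin_k).
Qed.

Section IrreducibleNecessary.
Variables (k : nat) (D : diagram).
Hypotheses (FD : ferrers D) (irrD : irreducible D k.+1) (kk : (k, k) \in D).

Let del_cell := proj1 ((irreducibleP D (ltn0Sn k)).1 irrD).
Let add_cell := proj2 ((irreducibleP D (ltn0Sn k)).1 irrD).
Let k_gt0 : 0 < k. Proof. by have [] := FD kk. Qed.
Let row_len_ge x : 0 < x <= k -> k <= row_len D x.
Proof. by move=> rng; exact: (leq_row_len FD kk rng). Qed.
Let col_len_ge y : 0 < y <= k -> k <= col_len D y.
Proof. by move=> rng; exact: (leq_col_len FD kk rng). Qed.

Lemma irreducible_rectangle x y :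
  k <= x <= col_len D k -> k <= y <= row_len D k -> (x, y) \in D.
Proof.
move=> /andP[kx xc] /andP[ky yr].
suff rect i j : k + i <= col_len D k -> k + j <= row_len D k -> (k + i, k + j) \in D.
  by have := rect (x - k) (y - k); rewrite !subnKC //; apply.
elim: i j => [|i IHi] j ci rj; first by rewrite addn0 (mem_row FD) //; lia.
elim: j rj => [|j IHj] rj; first by rewrite addn0 (mem_col FD) //; lia.
apply/negPn/negP => nD.
have up : (k + i, k + j.+1) \in D by apply: IHi; lia.
have left : (k + i.+1, k + j) \in D by apply: IHj; lia.
have FPD : ferrers ((k + i.+1, k + j.+1) |` D).
  by move: up left; rewrite !addnS => up left; apply: ferrers_fsetU1.
have [j' /andP[j'k _] notR] := add_cell nD FPD.
by move: notR; rewrite /nu_region /=; lia.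
Qed.

Lemma irreducible_standard_form n :
  of_order n D -> standard_form n D k.+1 (col_len D k) (row_len D k).
Proof.
move=> OD; have kc : k <= col_len D k by rewrite col_len_ge ?k_gt0 /=.
have kr : k <= row_len D k by rewrite row_len_ge ?k_gt0 /=.
split=> // x y /=.
rewrite /inB /=; apply/idP/idP => [/and3P[xyD /andP[kx _] /andP[ky _]] | /andP[xr yr]].
  have [x_gt0 y_gt0 _] := FD xyD.
  by rewrite kx ky (leq_col_len FD xyD) ?(leq_row_len FD xyD) //; lia.
have /andP[cn _] := OD _ _ (col_len_mem (leq_trans k_gt0 kc)).
have /andP[_ rn] := OD _ _ (row_len_mem (leq_trans k_gt0 kr)).
by rewrite irreducible_rectangle //; lia.
Qed.

Lemma irreducible_argmin_last : nu_argmin D k.+1 k.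
Proof.
have [j0 j0_min] := numin_attained D (ltn0Sn k).
have min_le j : nu_argmin D k.+1 j -> j <= k by case/andP.
case: (ex_maxnP (ex_intro _ j0 j0_min) min_le) => p p_min p_max.
have [lt_kp | lt_pk | eq_kp] := ltngtP k p; last by move: p_min; rewrite -eq_kp.
  by have := min_le _ p_min; lia.
(* p < k is the largest minimiser: either column p + 1 can be lengthened, or
   row k - p shortened, or both are flat and [nu_flat] contradicts minimality. *)
exfalso; have [p0 | p_gt0] := posnP p.
  have PD : ((col_len D 1).+1, 1) \notin D by rewrite (mem_col FD) // ltnn andbF.
  have FPD : ferrers (((col_len D 1).+1, 1) |` D) by apply: ferrers_add_col_end.
  have [j /p_max jp] := add_cell PD FPD.
  by have := col_len_ge (y := 1); rewrite /nu_region /=; lia.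
have x_gt0 : 0 < k - p by rewrite subn_gt0.
have := row_len_nonincr FD x_gt0; rewrite leq_eqVlt => /orP[/eqP eq_row | lt_row].
  have := col_len_nonincr FD p_gt0; rewrite leq_eqVlt => /orP[/eqP eq_col | lt_col].
    move: p_min => /andP[_ /eqP nu_p].
    have p_rng : 0 < p < k by rewrite p_gt0.
    have := nu_flat FD kk p_rng eq_row eq_col; have := @numin_le k.+1 D p.-1.
    by have := @numin_le k.+1 D p.+1; lia.
  have PD : ((col_len D p.+1).+1, p.+1) \notin D by rewrite (mem_col FD) // ltnn andbF.
  have [j /p_max jp] := add_cell PD (ferrers_add_col_end FD (ltn0Sn p) (fun _ => lt_col)).
  by have := col_len_ge (y := p.+1); rewrite /nu_region /=; lia.
have PD : (k - p, row_len D (k - p)) \in D.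
  by rewrite (mem_row FD) // leqnn andbT; have := row_len_ge (x := k - p); lia.
have [j /p_max jp] := del_cell PD (ferrers_del_row_end FD x_gt0 lt_row).
by rewrite /nu_region /=; lia.
Qed.

Lemma irreducible_argmin_first : nu_argmin D k.+1 0.
Proof.
have [j0 j0_min] := numin_attained D (ltn0Sn k).
case: (ex_minnP (ex_intro _ j0 j0_min)) => q q_min q_min_le.
have [q0 | q_gt0] := posnP q; first by rewrite -q0.
exfalso; have /andP[qk /eqP nu_q] := q_min.
have [lt_qk | eq_qk] : q < k \/ q = k by lia.
  have := col_len_nonincr FD q_gt0; rewrite leq_eqVlt => /orP[/eqP eq_col | lt_col].
    have x_gt0 : 0 < k - q by rewrite subn_gt0.
    have := row_len_nonincr FD x_gt0; rewrite leq_eqVlt => /orP[/eqP eq_row | lt_row].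
      have q_rng : 0 < q < k by rewrite q_gt0.
      have := nu_flat FD kk q_rng eq_row eq_col; have := @numin_le k.+1 D q.-1.
      by have := @numin_le k.+1 D q.+1; lia.
    have PD : ((k - q).+1, (row_len D (k - q).+1).+1) \notin D.
      by rewrite (mem_row FD) // ltnn andbF.
    have FPD := ferrers_add_row_end FD (ltn0Sn (k - q)) (fun _ => lt_row).
    have [j j_min] := add_cell PD FPD; have /andP[jk _] := j_min; have := q_min_le _ j_min.
    by have := row_len_ge (x := (k - q).+1); rewrite /nu_region /=; lia.
  have PD : (col_len D q, q) \in D.
    by rewrite (mem_col FD) // leqnn andbT; have := col_len_ge (y := q); lia.
  have [j /q_min_le qj] := del_cell PD (ferrers_del_col_end FD q_gt0 lt_col).
  by rewrite /nu_region /=; lia.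
have PD : (1, (row_len D 1).+1) \notin D by rewrite (mem_row FD) // ltnn andbF.
have FPD : ferrers ((1, (row_len D 1).+1) |` D) by apply: ferrers_add_row_end.
have [j j_min] := add_cell PD FPD; have /andP[jk _] := j_min; have := q_min_le _ j_min.
by have := row_len_ge (x := 1); rewrite /nu_region /=; lia.
Qed.

Lemma irreducible_square_argmin :
  col_len D k = k -> row_len D k = k -> exists2 j, 0 < j < k & nu_argmin D k.+1 j.
Proof.
move=> ck rk.
have kSk : (k.+1, k) \notin D by rewrite (mem_col FD) // ck ltnn andbF.
have kkS : (k, k.+1) \notin D by rewrite (mem_row FD) // rk ltnn andbF.
have [j j_min] := del_cell kk (ferrers_fsetD1 FD kSk kkS).
by rewrite /nu_region /= => jR; exists j => //; lia.
Qed.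

Lemma irreducible_cond2 n : of_order n D -> cond2 n D k.+1.
Proof.
move=> OD; have /andP[_ /eqP nu_0] := irreducible_argmin_first.
have /andP[_ /eqP nu_k] := irreducible_argmin_last.
exists (col_len D k), (row_len D k); split=> /=.
- exact: irreducible_standard_form.
- by rewrite nu_0 nu_k.
- by move=> j jk; rewrite nu_0 numin_le //; lia.
case=> ck rk; have [j j_rng /andP[_ /eqP nu_j]] := irreducible_square_argmin ck rk.
by exists j; split; [lia | rewrite nu_j nu_0].
Qed.

End IrreducibleNecessary.

Lemma cond2_iff_cond3 n k (D : diagram) : 0 < k -> ferrers D -> of_order n D ->
  cond2 n D k.+1 <-> cond3 n D k.+1.
Proof.
move=> k_gt0 FD OD.
have reformulate a b : standard_form n D k.+1 a b -> [/\
    nu D k.+1 0 = nu D k.+1 k <->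
      (\sum_(1 <= i < k) (cY D k.+1 a i)%:Z - \sum_(1 <= i < k) (cX D k.+1 b i)%:Z
         = (b%:Z - a%:Z) * k%:Z)%R,
    forall j, j <= k -> nu D k.+1 0 <= nu D k.+1 j <-> (0 <= ineq3 D k.+1 a b j)%R &
    forall j, j <= k -> nu D k.+1 j = nu D k.+1 0 <-> ineq3 D k.+1 a b j = 0%R].
  move=> SF; have := ineq3_last D a b k_gt0; have := nu_ineq3 FD OD SF (leqnn k).
  by split=> [|j /(nu_ineq3 FD OD SF)|j /(nu_ineq3 FD OD SF)]; lia.
split=> -[a [b [SF c1 c2 c3]]]; exists a, b; have [e1 e2 e3] := reformulate a b SF.
all: split=> //= [|j rj|/c3[j [rj nu_j]]]; first exact/e1.
all: have jk : j <= k by lia.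
all: by [apply/(e2 j jk)/c2 | exists j; split=> //; apply/(e3 j jk)].
Qed.

Lemma irreducible1 (D : diagram) : ferrers D -> ~ irreducible D 1.
Proof.
move=> FD /(irreducibleP D (ltn0Sn 0)) [_ addP].
have PD : ((col_len D 1).+1, 1) \notin D by rewrite (mem_col FD) // ltnn andbF.
have FPD : ferrers (((col_len D 1).+1, 1) |` D) by apply: ferrers_add_col_end.
by have [j /andP[j0 _]] := addP _ PD FPD; rewrite /nu_region /=; lia.
Qed.

Lemma standard_form1 n (D : diagram) a b : ferrers D -> ~ standard_form n D 1 a b.
Proof.
(* For d = 1 the box B_{n,0} contains (0, 0), which no Ferrers diagram does. *)
move=> FD [_ _ /(_ 0 0)]; rewrite /inB /= !leq0n /=.
by case: (boolP ((0, 0) \in D)) => // /FD[].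
Qed.

Theorem theorem4p10 (d n : nat) (D : diagram) :
  0 < d -> 0 < n -> ferrers D -> of_order n D ->
  (exists x y, ((x, y) \in D) && inB n d x y) ->
  (irreducible D d <-> cond2 n D d) /\ (irreducible D d <-> cond3 n D d).
Proof.
case: d => [//|k] _ _ FD OD [x [y /andP[xyD xyB]]].
have [-> | k_gt0] := posnP k.
  have no2 : ~ cond2 n D 1 by case=> a [b [/(standard_form1 FD)]].
  have no3 : ~ cond3 n D 1 by case=> a [b [/(standard_form1 FD)]].
  by have := irreducible1 FD; tauto.
have kk : (k, k) \in D.
  have [_ _ sub] := FD _ _ xyD; move: xyB; rewrite /inB /=.
  by case/andP=> /andP[kx _] /andP[ky _]; apply: sub; lia.
have irr_cond2 : irreducible D k.+1 <-> cond2 n D k.+1.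
  split=> [irrD | ]; first exact: (irreducible_cond2 FD irrD kk OD).
  exact: (cond2_irreducible FD OD).
by have := cond2_iff_cond3 k_gt0 FD OD; tauto.
Qed.
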